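(* Let $\mathbf A\in\mathbb C^{m\times n}$, $\mathbf y\in\mathbb C^{1\times n}$, consider the system $\mathbf x\mathbf A=\mathbf y$ with unknown row vector $\mathbf x\in\mathbb C^{1\times m}$, and let $\mathbf x^{0}=\mathbf y\mathbf A^{+}=(x^{0}_1,\dots,x^{0}_m)$. Put $\mathbf g=\mathbf y\mathbf A^{*}$. (i) If $\operatorname{rank}\mathbf A=m$, then for all $i=1,\dots,m$, $x^{0}_i=\dfrac{\det\left((\mathbf A\mathbf A^{*})_{i.}(\mathbf g)\right)}{\det(\mathbf A\mathbf A^{*})}$. (ii) If $\operatorname{rank}\mathbf A=r\le n<m$, then for all $i=1,\dots,m$, $x^{0}_i=\dfrac{\sum_{\alpha\in I_{r,m}\{i\}}\left|\left((\mathbf A\mathbf A^{*})_{i.}(\mathbf g)\right)^{\alpha}_{\alpha}\right|}{d_r(\mathbf A\mathbf A^{*})}$.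
   Context: $\mathbf A^{+}$ is the Moore–Penrose inverse: the unique $\mathbf X$ with $\mathbf A\mathbf X\mathbf A=\mathbf A$, $\mathbf X\mathbf A\mathbf X=\mathbf X$, $(\mathbf A\mathbf X)^{*}=\mathbf A\mathbf X$, $(\mathbf X\mathbf A)^{*}=\mathbf X\mathbf A$. For a square matrix $\mathbf M$, $\mathbf M_{i.}(\mathbf c)$ is obtained from $\mathbf M$ by replacing its $i$-th row by the row vector $\mathbf c$. $I_{r,m}$ is the set of strictly increasing sequences of $r$ elements of $\{1,\dots,m\}$, $I_{r,m}\{i\}=\{\alpha\in I_{r,m}:i\in\alpha\}$, $\mathbf M^{\alpha}_{\alpha}$ is the principal submatrix indexed by $\alpha$, $|\cdot|$ is the determinant, and $d_r(\mathbf M)=\sum_{\alpha\in I_{r,m}}|\mathbf M^{\alpha}_{\alpha}|$ is the sum of principal minors of order $r$. *)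

From HB Require Import structures.
From mathcomp Require Import all_boot all_order all_algebra.
Set Implicit Arguments.
Unset Strict Implicit.
Unset Printing Implicit Defensive.
Import Order.TTheory GRing.Theory Num.Theory.
Local Open Scope ring_scope.

Definition ctrmx (C : numClosedFieldType) (m n : nat) (A : 'M[C]_(m, n))
  : 'M[C]_(n, m) := (map_mx Num.conj A)^T.

Definition is_MP_inverse (C : numClosedFieldType) (m n : nat)
  (A : 'M[C]_(m, n)) (X : 'M[C]_(n, m)) : Prop :=
  [/\ A *m X *m A = A, X *m A *m X = X,
      ctrmx (A *m X) = A *m X & ctrmx (X *m A) = X *m A].

Definition row_repl (R : Type) (m : nat) (M : 'M[R]_m) (i : 'I_m)
  (c : 'rV[R]_m) : 'M[R]_m :=
  \matrix_(k, l) (if k == i then c ord0 l else M k l).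

(* alpha : 'I_r -> 'I_m is strictly increasing: an element of I_{r,m}. *)
Definition strict_incr (r m : nat) (alpha : {ffun 'I_r -> 'I_m}) : bool :=
  [forall k : 'I_r, forall l : 'I_r, (k < l)%N ==> (alpha k < alpha l)%N].

Definition pminor (R : comRingType) (m r : nat) (M : 'M[R]_m)
  (alpha : {ffun 'I_r -> 'I_m}) : R :=
  \det (\matrix_(k, l) M (alpha k) (alpha l)).

Definition dsum (R : comRingType) (m : nat) (r : nat) (M : 'M[R]_m) : R :=
  \sum_(alpha : {ffun 'I_r -> 'I_m} | strict_incr alpha) pminor M alpha.

From mathcomp Require Import all_boot all_order all_algebra perm.
From mathcomp Require Import zify.
Import Order.TTheory GRing.Theory Num.Theory.
Local Open Scope ring_scope.
Set Implicit Arguments.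
Unset Strict Implicit.
Unset Printing Implicit Defensive.

(** With [M = A A^*], the Penrose equations give [x0 M = g], so (i) is Cramer's
    rule. For (ii), expand [det (M + X I)] and [det ((M + X I)_{i.}(g))] as
    polynomials in [X]: the coefficient of [X^(m-r)] is [d_r(M)], resp. the sum of
    the principal minors of [M_{i.}(g)] of order [r] through [i]. Since
    [g = x0 (M + X I) - X x0], the second determinant equals
    [x0_i det (M + X I) - X det ((M + X I)_{i.}(x0))], and the coefficient of
    [X^(m-r-1)] in the last determinant is a sum of principal minors of order
    [r + 1] of [M_{i.}(x0)], a matrix whose rows lie in the row space of [A^*],
    hence of rank at most [r]: they vanish. Finally [d_r(M) <> 0]: [M] is hermitian of
    rank [r], so after unitary diagonalization [det (M + X I)] is [X^(m-r)] times
    a polynomial not vanishing at [0]. *)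

Section PrincipalMinors.
Variable R : comNzRingType.

Lemma det_row_repl n (B : 'M[R]_n) i (v : 'rV[R]_n) :
  \det (row_repl B i v) = (v *m \adj B) 0 i.
Proof.
rewrite (expand_det_row _ i) mxE; apply: eq_bigr => j _.
rewrite !mxE eqxx; congr (_ * (_ * \det _)).
by apply/matrixP => k l; rewrite !mxE eq_sym (negbTE (neq_lift _ _)).
Qed.

Lemma det_row_repl_mul n (B : 'M[R]_n) i (x : 'rV[R]_n) :
  \det (row_repl B i (x *m B)) = x 0 i * \det B.
Proof. by rewrite det_row_repl -mulmxA mul_mx_adj mul_mx_scalar mxE mulrC. Qed.

Definition principal_pad n (B : 'M[R]_n) (T : {set 'I_n}) : 'M[R]_n :=
  \matrix_(k, l) (if k \in T then B k l else (k == l)%:R).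

Lemma det_add_diag n (B : 'M[R]_n) (d : 'rV[R]_n) :
  \det (B + diag_mx d) =
  \sum_(T : {set 'I_n}) (\prod_(k in ~: T) d 0 k) * \det (principal_pad B T).
Proof.
have padE (T : {set 'I_n}) :
    \det (\matrix_(k, l) (if k \in T then B k l else (k == l)%:R * d 0 k)) =
    (\prod_(k in ~: T) d 0 k) * \det (principal_pad B T).
  have -> : \matrix_(k, l) (if k \in T then B k l else (k == l)%:R * d 0 k) =
      diag_mx (\row_k (if k \in T then 1 else d 0 k)) *m principal_pad B T.
    rewrite mul_diag_mx; apply/matrixP => k l; rewrite !mxE.
    by case: (k \in T); rewrite ?mul1r // mulrC.
  rewrite det_mulmx det_diag [in RHS]big_mkcond; congr (_ * _).
  by apply: eq_bigr => k _; rewrite !mxE inE; case: (k \in T).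
under [RHS]eq_bigr do rewrite -padE.
rewrite [LHS]/(\det _) (exchange_big_dep xpredT) //=.
apply: eq_bigr => s _; rewrite -big_distrr /=; congr (_ * _).
rewrite (eq_bigr (fun k => B k (s k) + (k == s k)%:R * d 0 k)); last first.
  by move=> k _; rewrite !mxE mulr_natl.
rewrite bigA_distr; apply: eq_bigr => T _; apply: eq_bigr => k _.
by rewrite !mxE; case: (k \in T).
Qed.
End PrincipalMinors.

Section PrincipalMinorPolynomial.
Variable R : comNzRingType.

Definition diagX n (D : {set 'I_n}) : 'M[{poly R}]_n :=
  diag_mx (\row_k (if k \in D then 'X else 0)).

Lemma diagX_setT n : diagX [set: 'I_n] = 'X%:M.
Proof.
by rewrite -diag_const_mx; congr diag_mx; apply/rowP => k; rewrite !mxE in_setT.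
Qed.

Lemma coef_det_add_diagX n (B : 'M[R]_n) (D : {set 'I_n}) r : (r <= n)%N ->
  (\det (map_mx polyC B + diagX D))`_(n - r) =
  \sum_(T : {set 'I_n} | (~: T \subset D) && (#|T| == r)) \det (principal_pad B T).
Proof.
move=> le_rn; rewrite det_add_diag coef_sum (bigID (fun T => ~: T \subset D)) /=.
rewrite [X in _ + X]big1 ?addr0 => [|T /subsetPn[k kT kD]]; last first.
  by rewrite (bigD1 k) //= mxE (negbTE kD) !mul0r coef0.
rewrite big_mkcondr /=; apply: eq_bigr => T sTD.
have padE : principal_pad (map_mx polyC B) T = map_mx polyC (principal_pad B T).
  by apply/matrixP => k l; rewrite !mxE; case: (k \in T); rewrite ?rmorph_nat.
have -> : \prod_(k in ~: T) (\row_k (if k \in D then 'X else 0)) 0 k = 'X^(n - #|T|)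
    :> {poly R}.
  rewrite (eq_bigr (fun _ => 'X)) => [|k /(subsetP sTD) kD]; last by rewrite mxE kD.
  by rewrite prodr_const cardsCs setCK card_ord.
rewrite padE det_map_mx mulrC mul_polyC coefZ coefXn.
have le_Tn : (#|T| <= n)%N by rewrite -[X in (_ <= X)%N]card_ord max_card.
rewrite (_ : (n - r == n - #|T|)%N = (#|T| == r)); last by lia.
by case: eqP; rewrite ?mulr1 ?mulr0.
Qed.
End PrincipalMinorPolynomial.

Arguments diagX {R n} D.

Lemma sorted_enum_ord n : sorted <%O (enum 'I_n).
Proof. by have := iota_ltn_sorted 0 n; rewrite -val_enum_ord sorted_map. Qed.

Section StrictlyIncreasing.
Variables n r : nat.
Implicit Types (a b : {ffun 'I_r -> 'I_n}) (T : {set 'I_n}).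

Lemma strict_incrP a : reflect {homo a : k l / (k < l)%O} (strict_incr a).
Proof.
apply: (iffP forallP) => [H k l|H k]; first exact/implyP/(forallP (H k)).
by apply/forallP => l; apply/implyP/H.
Qed.

Lemma strict_incr_inj a : strict_incr a -> injective a.
Proof. by move/strict_incrP/le_mono/inc_inj. Qed.

Lemma sorted_codom a : strict_incr a -> sorted <%O (codom a).
Proof.
move/strict_incrP=> a_incr; rewrite codomE sorted_map.
exact: sub_sorted (sorted_enum_ord r).
Qed.

Lemma strict_incr_codom_inj a b : strict_incr a -> strict_incr b ->
  [set x in codom a] = [set x in codom b] -> a = b.
Proof.
move=> sa sb eq_ab.
have : codom a = codom b.
  apply: lt_sorted_eq; rewrite ?sorted_codom // => x.
  by have /setP/(_ x) := eq_ab; rewrite !inE.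
by rewrite !codomE => /eq_in_map eq_ab'; apply/ffunP => k; apply/eq_ab'/mem_enum.
Qed.

Lemma strict_incr_of_set T : #|T| = r ->
  exists2 a : {ffun 'I_r -> 'I_n}, strict_incr a & [set x in codom a] = T.
Proof.
move=> cardT; pose a := [ffun k => @enum_val _ (mem T) (cast_ord (esym cardT) k)].
have sortedT : sorted <%O (enum T).
  have -> : enum T = [seq x <- enum 'I_n | x \in T] by rewrite enumT /enum_mem unlock.
  exact/lt_sorted_filter/sorted_enum_ord.
exists a.
  apply/strict_incrP => k l lt_kl; rewrite !ffunE.
  set x0 := enum_val _; rewrite /x0 !(enum_val_nth x0).
  by apply: (sorted_ltn_nth lt_trans x0 sortedT); rewrite ?inE -?cardE ?cardT.
apply/setP => x; rewrite inE; apply/codomP/idP => [[k ->]|xT].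
  by rewrite ffunE enum_valP.
by exists (cast_ord cardT (enum_rank_in xT x)); rewrite ffunE cast_ordK enum_rankK_in.
Qed.

Lemma big_strict_incr (V : nmodType) (P : pred {set 'I_n}) (F : {set 'I_n} -> V) :
  \sum_(T : {set 'I_n} | (#|T| == r) && P T) F T =
  \sum_(a : {ffun 'I_r -> 'I_n} | strict_incr a && P [set x in codom a])
     F [set x in codom a].
Proof.
pose A := [set a : {ffun 'I_r -> 'I_n} | strict_incr a && P [set x in codom a]].
rewrite [RHS](eq_bigl [in A]) => [|a]; last by rewrite inE.
rewrite -[RHS]big_imset /=; last first.
  by move=> a b; rewrite !inE => /andP[sa _] /andP[sb _]; apply: strict_incr_codom_inj.
apply: eq_bigl => T; apply/idP/imsetP => [/andP[/eqP cardT PT]|[a]].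
  have [a sa aT] := strict_incr_of_set cardT.
  by exists a; rewrite ?inE ?sa ?aT.
rewrite inE => /andP[sa Pa] ->; rewrite Pa andbT.
by rewrite cardsE card_codom ?card_ord //; apply: strict_incr_inj.
Qed.
End StrictlyIncreasing.

Section PrincipalPadSubmatrix.
Variable R : comNzRingType.

Lemma det_mxsub_bij p n (eq_pn : p = n) (h : 'I_p -> 'I_n) (M : 'M[R]_n) :
  injective h -> \det (mxsub h h M) = \det M.
Proof.
move: h; rewrite eq_pn => h inj_h; pose s := perm inj_h.
have -> : mxsub h h M = perm_mx s *m M *m perm_mx s^-1.
  by rewrite -row_permE -col_permE; apply/matrixP => i j; rewrite !mxE !permE.
by rewrite !det_mulmx !det_perm odd_permV mulrC mulrA -signr_addb addbb mul1r.
Qed.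

Lemma det_principal_pad r n (a : 'I_r -> 'I_n) (B : 'M[R]_n) :
  injective a -> \det (principal_pad B [set x in codom a]) = \det (mxsub a a B).
Proof.
move=> inj_a; set T := [set x in codom a].
have aT k : a k \in T by rewrite inE codom_f.
have cardT : #|T| = r by rewrite cardsE card_codom // card_ord.
have cardTC : #|~: T| = (n - r)%N by rewrite cardsCs setCK card_ord cardT.
have eq_n : (r + (n - r))%N = n by rewrite -cardTC -cardT cardsC card_ord.
pose c (j : 'I_(n - r)) : 'I_n := @enum_val _ (mem (~: T)) (cast_ord (esym cardTC) j).
have cT j : c j \notin T by have := enum_valP (cast_ord (esym cardTC) j); rewrite inE.
pose h i := match split i with inl k => a k | inr j => c j end.
have hl k : h (lshift _ k) = a k by rewrite /h (unsplitK (inl k)).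
have hr j : h (rshift _ j) = c j by rewrite /h (unsplitK (inr j)).
have inj_h : injective h.
  move=> i1 i2; rewrite -[i1]splitK -[i2]splitK.
  case: (split i1) (split i2) => k1 [] k2 /=; rewrite ?hl ?hr.
  - by move/inj_a => ->.
  - by move=> eq_ac; have := cT k2; rewrite -eq_ac aT.
  - by move=> eq_ca; have := cT k1; rewrite eq_ca aT.
  - by move/enum_val_inj/cast_ord_inj => ->.
rewrite -(det_mxsub_bij eq_n _ inj_h) -[mxsub h h _]submxK.
have -> : dlsubmx (mxsub h h (principal_pad B T)) = 0.
  apply/matrixP => i j; rewrite !mxE hl hr (negbTE (cT i)).
  by case: eqP => // eq_ca; have := cT i; rewrite eq_ca aT.
have -> : drsubmx (mxsub h h (principal_pad B T)) = 1%:M.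
  apply/matrixP => i j; rewrite !mxE !hr (negbTE (cT i)).
  by rewrite (inj_eq (fun _ _ e => cast_ord_inj (enum_val_inj e))).
rewrite det_ublock det1 mulr1; congr (\det _).
by apply/matrixP => i j; rewrite !mxE !hl aT.
Qed.

Lemma pminor_principal_pad r n (B : 'M[R]_n) (a : {ffun 'I_r -> 'I_n}) :
  strict_incr a -> pminor B a = \det (principal_pad B [set x in codom a]).
Proof. by move/strict_incr_inj=> inj_a; rewrite det_principal_pad. Qed.
End PrincipalPadSubmatrix.

Section PrincipalMinorRank.
Variable F : fieldType.

Lemma mxrank_mxsub m n p q (f : 'I_p -> 'I_m) (g : 'I_q -> 'I_n) (B : 'M[F]_(m, n)) :
  (\rank (mxsub f g B) <= \rank B)%N.
Proof.
rewrite -[B]mulmx1 mxsub_mul (leq_trans (mxrankM_maxl _ _)) //.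
by rewrite rowsubE mulmx1 mxrankM_maxr.
Qed.

Lemma det_principal_pad_rank n (B : 'M[F]_n) (T : {set 'I_n}) :
  (\rank B < #|T|)%N -> \det (principal_pad B T) = 0.
Proof.
move=> lt_BT; pose a := @enum_val _ (mem T).
have -> : T = [set x in codom a].
  apply/setP => x; rewrite inE; apply/idP/codomP => [xT|[k ->]]; last exact: enum_valP.
  by exists (enum_rank_in xT x); rewrite /a enum_rankK_in.
rewrite det_principal_pad; last exact: enum_val_inj.
apply/eqP; apply: contraTT lt_BT; rewrite -unitfE -unitmxE -leqNgt => /mxrank_unit.
by move=> rank_sub; apply: leq_trans (mxrank_mxsub a a B); rewrite rank_sub.
Qed.

Lemma coef_det_add_diagX_rank n (B : 'M[F]_n) (D : {set 'I_n}) r :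
  (\rank B < r)%N -> (r <= n)%N -> (\det (map_mx polyC B + diagX D))`_(n - r) = 0.
Proof.
move=> lt_Br le_rn; rewrite coef_det_add_diagX // big1 // => T /andP[_ /eqP cardT].
by apply: det_principal_pad_rank; rewrite cardT.
Qed.
End PrincipalMinorRank.

Section CramerPrincipalMinors.
Variable R : comNzRingType.
Variables (m : nat) (B : 'M[R]_m).
Let N := map_mx polyC B + 'X%:M.

Lemma dsum_coef r : (r <= m)%N -> dsum r B = (\det N)`_(m - r).
Proof.
move=> le_rm; rewrite /N -diagX_setT coef_det_add_diagX // /dsum.
rewrite (eq_bigl (fun T : {set 'I_m} => (#|T| == r) && xpredT T)) => [|T]; last first.
  by rewrite subsetT andbT.
rewrite big_strict_incr; apply: eq_big => [a|a sa]; first by rewrite andbT.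
exact: pminor_principal_pad.
Qed.

Lemma row_repl_add_X i (v : 'rV[R]_m) :
  row_repl N i (map_mx polyC v) = map_mx polyC (row_repl B i v) + diagX [set~ i].
Proof.
apply/matrixP => k l; rewrite /N !mxE !inE.
by case: eqP; rewrite ?mul0rn ?addr0.
Qed.

Lemma sum_pminor_row_repl r i (v : 'rV[R]_m) : (r <= m)%N ->
  \sum_(a : {ffun 'I_r -> 'I_m} | strict_incr a && (i \in codom a))
     pminor (row_repl B i v) a =
  (\det (row_repl N i (map_mx polyC v)))`_(m - r).
Proof.
move=> le_rm.
rewrite row_repl_add_X (coef_det_add_diagX (row_repl B i v) [set~ i] le_rm).
rewrite (eq_bigl (fun T : {set 'I_m} => (#|T| == r) && (i \in T))) => [|T]; last first.
  by rewrite setCS sub1set andbC.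
rewrite (big_strict_incr r (fun T : {set 'I_m} => i \in T)).
apply: eq_big => [a|a /andP[sa _]]; first by rewrite inE.
exact: pminor_principal_pad.
Qed.

Lemma det_row_repl_mul_add_X i (x : 'rV[R]_m) :
  \det (row_repl N i (map_mx polyC (x *m B))) =
  (x 0 i)%:P * \det N - 'X * \det (row_repl N i (map_mx polyC x)).
Proof.
have -> : map_mx polyC (x *m B) = map_mx polyC x *m N - 'X *: map_mx polyC x.
  by rewrite /N mulmxDr mul_mx_scalar -map_mxM addrK.
rewrite !det_row_repl mulmxBl -mulmxA mul_mx_adj mul_mx_scalar -scalemxAl !mxE.
by rewrite mulrC.
Qed.
End CramerPrincipalMinors.

Lemma cramer_principal_minors (F : fieldType) m (B : 'M[F]_m) (x : 'rV[F]_m) r i :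
  (r <= m)%N -> (\rank (row_repl B i x) <= r)%N -> dsum r B != 0 ->
  x 0 i = (\sum_(a : {ffun 'I_r -> 'I_m} | strict_incr a && (i \in codom a))
             pminor (row_repl B i (x *m B)) a) / dsum r B.
Proof.
move=> le_rm rank_x dsum_neq0.
rewrite sum_pminor_row_repl // det_row_repl_mul_add_X coefB coefCM coefXM -dsum_coef //.
case: eqP => [_|/eqP]; first by rewrite subr0 mulfK.
rewrite -lt0n subn_gt0 => lt_rm.
by rewrite -subnS row_repl_add_X coef_det_add_diagX_rank ?subr0 ?mulfK.
Qed.

Section Diagonalizable.
Variable F : fieldType.

Lemma mxrank_diag_mx_le n (d : 'rV[F]_n) :
  (\rank (diag_mx d) <= #|[set k : 'I_n | (d 0 k != 0)%R]|)%N.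
Proof.
set S := [set k : 'I_n | (d 0 k != 0)%R]; pose f := @enum_val _ (mem S).
apply: leq_trans (rank_leq_row (rowsub f (diag_mx d))); apply: mxrankS.
apply/row_subP => k; have [dk0|dk_neq0] := eqVneq (d 0 k) 0.
  suff -> : row k (diag_mx d) = 0 by apply: sub0mx.
  by apply/rowP => l; rewrite !mxE dk0 mul0rn.
have kS : k \in S by rewrite inE.
by rewrite -(enum_rankK_in kS kS) -row_rowsub row_sub.
Qed.

Lemma coef_det_add_X_diagonalizable n (M P : 'M[F]_n) (d : 'rV[F]_n) :
  P \in unitmx -> M = invmx P *m diag_mx d *m P ->
  (\det (map_mx polyC M + 'X%:M))`_(n - \rank M) != 0.
Proof.
move=> P_unit eq_M; set Z := [set k : 'I_n | (d 0 k == 0)%R].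
pose Q := \prod_(k : 'I_n | d 0 k != 0) ('X + (d 0 k)%:P).
have detE : \det (map_mx polyC M + 'X%:M) = 'X^#|Z| * Q.
  have -> : map_mx polyC M + 'X%:M = map_mx polyC (invmx P) *m
      diag_mx (\row_k ('X + (d 0 k)%:P)) *m map_mx polyC P.
    have -> : diag_mx (\row_k ('X + (d 0 k)%:P)) = 'X%:M + map_mx polyC (diag_mx d).
      apply/matrixP => i j; rewrite !mxE.
      by case: (i == j); rewrite ?mulr1n ?mulr0n ?addr0.
    rewrite mulmxDr mulmxDl -!map_mxM -eq_M addrC mul_mx_scalar -scalemxAl.
    by rewrite -map_mxM mulVmx // map_mx1 scalemx1.
  rewrite !det_mulmx det_diag mulrAC -det_mulmx -map_mxM mulVmx // map_mx1 det1 mul1r.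
  rewrite (bigID (fun k => d 0 k == 0)) /=; congr (_ * _).
    rewrite (eq_bigr (fun _ => 'X)) => [|k /eqP dk0]; last by rewrite mxE dk0 addr0.
    by rewrite prodr_const cardsE.
  by apply: eq_bigr => k _; rewrite mxE.
have Q0_neq0 : Q`_0 != 0.
  rewrite -horner_coef0 horner_prod; apply/prodf_neq0 => k dk_neq0.
  by rewrite hornerD hornerX hornerC add0r.
have le_Z : (#|Z| <= n - \rank M)%N.
  have : (\rank M <= #|~: Z|)%N.
    have -> : ~: Z = [set k : 'I_n | (d 0 k != 0)%R] by apply/setP => k; rewrite !inE.
    rewrite eq_M (leq_trans (mxrankM_maxl _ _)) // (leq_trans (mxrankM_maxr _ _)) //.
    exact: mxrank_diag_mx_le.
  by have := cardsC Z; rewrite card_ord; lia.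
have eq_Z : #|Z| = (n - \rank M)%N.
  apply/eqP; rewrite eqn_leq le_Z leqNgt; apply/negP => lt_Z.
  have le_Zn : (#|Z| <= n)%N by rewrite -[X in (_ <= X)%N]card_ord max_card.
  have := @coef_det_add_diagX_rank _ _ M setT (n - #|Z|).
  rewrite diagX_setT detE subKn // coefXnM ltnn subnn => Q0.
  by move: Q0_neq0; rewrite Q0 ?eqxx //; lia.
by rewrite -eq_Z detE coefXnM ltnn subnn.
Qed.
End Diagonalizable.

Section ConjugateTranspose.
Variable C : numClosedFieldType.

Lemma ctrmxM m n p (A : 'M[C]_(m, n)) (B : 'M[C]_(n, p)) :
  ctrmx (A *m B) = ctrmx B *m ctrmx A.
Proof. by rewrite /ctrmx map_mxM trmx_mul. Qed.

Lemma ctrmxK m n (A : 'M[C]_(m, n)) : ctrmx (ctrmx A) = A.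
Proof. by apply/matrixP => i j; rewrite !mxE conjCK. Qed.

Lemma mxrank_ctrmx m n (A : 'M[C]_(m, n)) : \rank (ctrmx A) = \rank A.
Proof. by rewrite /ctrmx mxrank_tr mxrank_map. Qed.

Lemma mxrank_mul_ctrmx m n (A : 'M[C]_(m, n)) : \rank (A *m ctrmx A) = \rank A.
Proof.
apply/eqP; rewrite eqn_leq mxrankM_maxl /=.
have sub_ker : (kermx (A *m ctrmx A) <= kermx A)%MS.
  apply/rV_subP => v /sub_kermxP vAA0; apply/sub_kermxP; set w := v *m A.
  have /matrixP/(_ 0 0) : w *m ctrmx w = 0.
    by rewrite ctrmxM mulmxA -(mulmxA v) vAA0 mul0mx.
  rewrite !mxE => /psumr_eq0P w_eq0; apply/rowP => j; rewrite [RHS]mxE.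
  apply/eqP; rewrite -mul_conjC_eq0; apply/eqP.
  by have := w_eq0 _ j isT; rewrite !mxE; apply=> k _; rewrite !mxE mul_conjC_ge0.
have := mxrankS sub_ker; rewrite !mxrank_ker.
by have := rank_leq_row A; have := rank_leq_row (A *m ctrmx A); lia.
Qed.

Lemma coef_det_add_X_hermitian n (M : 'M[C]_n) : ctrmx M = M ->
  (\det (map_mx polyC M + 'X%:M))`_(n - \rank M) != 0.
Proof.
move=> herm_M; apply: (coef_det_add_X_diagonalizable (spectral_unit M)).
apply/orthomx_spectralP/normalmxP.
by have -> : (M ^t* )%sesqui = M by rewrite -[RHS]herm_M /ctrmx map_trmx.
Qed.

Lemma MP_inverse_mul_ctrmx m n (A : 'M[C]_(m, n)) (X : 'M[C]_(n, m)) :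
  is_MP_inverse A X -> X *m A *m ctrmx A = ctrmx A.
Proof. by case=> AXA _ _ XA_herm; rewrite -{1}XA_herm -ctrmxM mulmxA AXA. Qed.

Lemma MP_inverse_factor m n (A : 'M[C]_(m, n)) (X : 'M[C]_(n, m)) :
  is_MP_inverse A X -> X = X *m ctrmx X *m ctrmx A.
Proof.
by case=> _ XAX AX_herm _; rewrite -mulmxA -ctrmxM AX_herm mulmxA XAX.
Qed.
End ConjugateTranspose.

Lemma row_repl_sub (F : fieldType) m n (B : 'M[F]_m) (C : 'M[F]_(n, m)) i v :
  (B <= C)%MS -> (v <= C)%MS -> (row_repl B i v <= C)%MS.
Proof.
move=> /row_subP sBC svC; apply/row_subP => k.
have [->|ki] := eqVneq k i.
  by rewrite (_ : row i _ = v) //; apply/rowP => l; rewrite !mxE eqxx.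
by rewrite (_ : row k _ = row k B) //; apply/rowP => l; rewrite !mxE (negbTE ki).
Qed.

Theorem theorem3p3 (C : numClosedFieldType) (m n : nat)
  (A : 'M[C]_(m, n)) (y : 'rV[C]_n) (Aplus : 'M[C]_(n, m)) :
  is_MP_inverse A Aplus ->
  let x0 := y *m Aplus in
  let g := y *m ctrmx A in
  (\rank A = m ->
     forall i : 'I_m,
       x0 ord0 i = \det (row_repl (A *m ctrmx A) i g) / \det (A *m ctrmx A))
  /\
  (forall r : nat, \rank A = r -> (r <= n)%N -> (n < m)%N ->
     forall i : 'I_m,
       x0 ord0 i =
         (\sum_(alpha : {ffun 'I_r -> 'I_m} | strict_incr alpha && (i \in codom alpha))
             pminor (row_repl (A *m ctrmx A) i g) alpha)
         / dsum r (A *m ctrmx A)).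
Proof.
move=> MP x0 g; set M := A *m ctrmx A.
have x0M : x0 *m M = g by rewrite /M mulmxA -(mulmxA y) -mulmxA MP_inverse_mul_ctrmx.
have rank_M : \rank M = \rank A by apply: mxrank_mul_ctrmx.
split=> [rank_A i | r rank_A _ _ i].
  have : M \in unitmx by rewrite -row_free_unit /row_free rank_M rank_A.
  by rewrite unitmxE unitfE -x0M det_row_repl_mul => /mulfK ->.
have le_rm : (r <= m)%N by rewrite -rank_A rank_leq_row.
rewrite -x0M; apply: cramer_principal_minors => //.
  rewrite -rank_A -(mxrank_ctrmx A); apply/mxrankS/row_repl_sub; first exact: submxMl.
  by rewrite /x0 (MP_inverse_factor MP) !mulmxA submxMl.
by rewrite dsum_coef // -rank_A -rank_M coef_det_add_X_hermitian // ctrmxM ctrmxK.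
Qed.
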